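(* Let $(x_1,\dots,x_n)$ be uniformly distributed on $\{x\in\{0,1\}^n:\sum_{j=1}^n x_j=s\}$, let $p=s/n$, let $a_1,\dots,a_n\in\mathbb{R}$, and let $t\in\mathbb{R}$ satisfy $|(a_j-a_k)t|\le\pi$ for all $1\le j,k\le n$. Then \[\Big|\mathbb{E}\big[e^{it\sum_{j=1}^n a_jx_j}\big]\Big|\le(n+1)\exp\big[-2p(1-p)t^2\operatorname{Var}[a_J]\,n/\pi^2\big],\] where $\operatorname{Var}[a_J]$ is the variance of $a_J$ for $J$ uniform on $[n]$. *)

From HB Require Import structures.
From mathcomp Require Import all_boot all_order all_algebra.
From mathcomp Require Import reals sequences exp trigo.
From mathcomp Require Import complex.
Set Implicit Arguments. Unset Strict Implicit. Unset Printing Implicit Defensive.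
Import Order.TTheory GRing.Theory Num.Theory.
Local Open Scope ring_scope.
Local Open Scope complex_scope.

Definition cexpi (R : realType) (theta : R) : R[i] := (cos theta +i* sin theta)%C.

Definition slice (n s : nat) : {set {ffun 'I_n -> bool}} :=
  [set x : {ffun 'I_n -> bool} | \sum_(j < n) (x j : nat) == s]%N.

Definition slice_charfun (R : realType) (n s : nat) (a : 'I_n -> R) (t : R) : R[i] :=
  (#|slice n s|%:R)^-1 *
    \sum_(x in slice n s) cexpi (t * \sum_(j < n) a j * (x j)%:R).

Definition meanJ (R : realType) (n : nat) (a : 'I_n -> R) : R :=
  (n%:R)^-1 * \sum_(j < n) a j.
Definition varJ (R : realType) (n : nat) (a : 'I_n -> R) : R :=
  (n%:R)^-1 * \sum_(j < n) (a j - meanJ a) ^+ 2.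

(* Write q = 1 - p.  Expanding prod_j (q + p e^{i t a_j} z) over x in {0,1}^n, the
   coefficient of z^s is p^s q^(n-s) times the sum of e^{i t sum_j a_j x_j} over the
   slice; averaging over the (n+1)-st roots of unity z = w^m, w = e^{2 pi i/(n+1)},
   against w^(-s m) isolates it.  Every factor satisfies |q + p e^{i phi}|^2 =
   1 - 2pq(1 - cos phi) <= exp(-2pq(1 - cos phi)), and Jordan's inequality
   1 - cos x >= 2 x^2 / pi^2 for |x| <= pi, summed over all pairs (j, k), gives
   sum_j (1 - cos (t a_j + theta)) >= 2 t^2 n Var[a_J] / pi^2 for every rotation theta.
   Finally, for p = s/n the binomial distribution puts mass at least 1/(n+1) on its
   mode s, so dividing by C(n,s) p^s q^(n-s) costs at most a factor n+1. *)
From HB Require Import structures.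
From mathcomp Require Import all_boot all_order all_algebra.
From mathcomp Require Import reals sequences exp trigo.
From mathcomp Require Import complex.
From mathcomp Require Import topology normedtype derive.
From mathcomp Require Import zify ring lra.
Set Implicit Arguments. Unset Strict Implicit. Unset Printing Implicit Defensive.
Import Order.TTheory GRing.Theory Num.Theory numFieldNormedType.Exports.

Definition binom_term (n s k : nat) := 'C(n, k) * s ^ k * (n - s) ^ (n - k).

Lemma binom_termS n s k : k < n ->
  binom_term n s k.+1 * (k.+1 * (n - s)) = binom_term n s k * ((n - k) * s).
Proof.
move=> lt_kn; rewrite /binom_term.
rewrite [in (n - s) ^ (n - k)](_ : n - k = (n - k.+1).+1) ?expnS; last by lia.
transitivity (k.+1 * 'C(n, k.+1) * (s ^ k * s * (n - s) * (n - s) ^ (n - k.+1))); first ring.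
rewrite mul_bin_left; ring.
Qed.

Lemma binom_term_le_mode n s k : s <= n -> k <= n ->
  binom_term n s k <= binom_term n s s.
Proof.
move=> le_sn le_kn; case: (leqP k s) => [le_ks | lt_sk].
- have incr : {in [pred i | i <= s] &, {homo binom_term n s : i j / i <= j}}.
    apply: homo_leq_in => [//|i j l|i j _ le_js l /andP[_ lt_lj]|i _].
    - exact: leq_trans.
    - by rewrite inE (leq_trans (ltnW lt_lj)).
    rewrite inE => lt_is; have lt_in := leq_trans lt_is le_sn.
    have pos : 0 < (n - i) * s by rewrite muln_gt0 subn_gt0 lt_in (leq_trans _ lt_is).
    rewrite -(leq_pmul2r pos) -binom_termS // leq_mul2l [(n - i) * s]mulnC.
    by rewrite leq_mul ?orbT ?leq_sub2l // ltnW.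
  by apply: incr; rewrite ?inE.
- have decr : {in [pred i | s <= i <= n] &,
      {homo binom_term n s : i j / i <= j >-> j <= i}}.
    apply: (homo_leq_in (r := fun a b => b <= a)) => [//|i j l ji lj|i j|i].
    - exact: leq_trans lj ji.
    - rewrite !inE => /andP[le_si _] /andP[_ le_jn] l /andP[lt_il lt_lj].
      by rewrite inE (leq_trans le_si (ltnW lt_il)) (leq_trans (ltnW lt_lj) le_jn).
    rewrite !inE => /andP[le_si _] /andP[_ lt_in].
    have pos : 0 < i.+1 * (n - s) by rewrite muln_gt0 subn_gt0 (leq_ltn_trans le_si lt_in).
    rewrite -(leq_pmul2r pos) binom_termS // leq_mul2l [i.+1 * _]mulnC.
    by rewrite leq_mul ?orbT ?leq_sub2l // leqW.
  by apply: decr; rewrite ?inE ?leqnn ?le_sn ?le_kn ?(ltnW lt_sk).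
Qed.

Lemma expn_le_binom_mode n s : s <= n -> n ^ n <= n.+1 * binom_term n s s.
Proof.
move=> le_sn.
have -> : n ^ n = \sum_(k < n.+1) binom_term n s k.
  rewrite -{1}(subnK le_sn) expnDn; apply: eq_bigr => k _.
  by rewrite /binom_term mulnA mulnAC.
rewrite -[n.+1 in X in _ <= X]card_ord -sum_nat_const.
by apply: leq_sum => k _; apply: binom_term_le_mode; rewrite // -ltnS.
Qed.

Definition weight {n} (x : {ffun 'I_n -> bool}) : nat := \sum_(j < n) x j.

Lemma weight_indicator n (A : {set 'I_n}) : weight [ffun j => j \in A] = #|A|.
Proof.
rewrite -sum1_card big_mkcond /weight; apply: eq_bigr => j _.
by rewrite ffunE; case: (j \in A).
Qed.

Lemma card_slice n s : #|slice n s| = 'C(n, s).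
Proof.
pose indicator (A : {set 'I_n}) := [ffun j => j \in A].
have inj_indicator : injective indicator.
  by move=> A B /ffunP eqAB; apply/setP => j; have := eqAB j; rewrite !ffunE.
rewrite -[n in 'C(n, s)]card_ord -card_draws -(card_imset _ inj_indicator).
apply: eq_card => x; rewrite inE; apply/idP/imsetP => [/eqP wx | [A]].
- have xE : x = [ffun j => j \in [set j | x j]] by apply/ffunP => j; rewrite !ffunE inE.
  by exists [set j | x j]; rewrite // inE -weight_indicator -xE; apply/eqP.
- by rewrite inE => /eqP <- ->; rewrite -weight_indicator.
Qed.

Lemma weight_le n (x : {ffun 'I_n -> bool}) : weight x <= n.
Proof.
by rewrite -[n in _ <= n]card_ord -sum1_card; apply: leq_sum => j _; case: (x j).
Qed.

Lemma sum_subn_weight n (x : {ffun 'I_n -> bool}) :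
  \sum_(j < n) (1 - x j) = n - weight x.
Proof.
apply/eqP; rewrite -(eqn_add2r (weight x)) subnK ?weight_le // -big_split /=.
by rewrite -[n in _ == n]card_ord -sum1_card; apply/eqP/eq_bigr => j _; case: (x j).
Qed.

Local Open Scope ring_scope.

Lemma binomial_mode_ge (R : realFieldType) n s (p : R) :
  (s <= n)%N -> p * n%:R = s%:R ->
  1 <= n.+1%:R * 'C(n, s)%:R * (p ^+ s * (1 - p) ^+ (n - s)).
Proof.
move=> le_sn pn.
have qn : (1 - p) * n%:R = (n - s)%:R by rewrite natrB // mulrBl mul1r pn.
have nn_gt0 : 0 < n%:R ^+ n :> R by rewrite -natrX ltr0n expn_gt0; case: (n).
have nnE : n%:R ^+ n = n%:R ^+ s * n%:R ^+ (n - s) :> R by rewrite -exprD subnKC.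
rewrite -(ler_pM2r nn_gt0) mul1r {2}nnE.
have -> : n.+1%:R * 'C(n, s)%:R * (p ^+ s * (1 - p) ^+ (n - s)) * (n%:R ^+ s * n%:R ^+ (n - s))
    = n.+1%:R * 'C(n, s)%:R * ((p * n%:R) ^+ s * ((1 - p) * n%:R) ^+ (n - s)).
  by rewrite !exprMn; ring.
rewrite pn qn -!natrX -!natrM ler_nat.
by have := expn_le_binom_mode le_sn; rewrite /binom_term !mulnA.
Qed.

Section Jordan.
Context {R : realType}.
Implicit Types x y : R.

Lemma sin_mvt {a b : R} : a < b ->
  exists2 c, a < c < b & sin b - sin a = cos c * (b - a).
Proof.
move=> lt_ab; have [|c] := MVT lt_ab (fun x _ => is_derive_sin x).
  exact/continuous_subspaceT/continuous_sin.
by rewrite in_itv; exists c.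
Qed.

Lemma sin_ge_jordan y : 0 <= y <= pi / 2 -> 2 * y / pi <= sin y.
Proof.
move=> /andP[y_ge0 y_le]; have pi_pos : 0 < pi :> R := pi_gt0 R.
have [->|y_neq0] := eqVneq y 0; first by rewrite sin0 mulr0 mul0r.
have [->|y_neq] := eqVneq y (pi / 2).
  by rewrite sin_pihalf [2 * _]mulrC divfK ?pnatr_eq0 // divff ?gt_eqF.
have y_gt0 : 0 < y by rewrite lt_neqAle eq_sym y_neq0.
have y_lt : y < pi / 2 by rewrite lt_neqAle y_neq.
(* Otherwise the mean value theorem on [0, y] and on [y, pi/2] yields c1 < c2 with
   cos c1 < 2/pi < cos c2, although cos decreases on [0, pi]. *)
rewrite leNgt; apply/negP => sin_lt.
have [c1 /andP[c1_gt0 c1_lt] slope1] := sin_mvt y_gt0.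
have [c2 /andP[c2_gt c2_lt] slope2] := sin_mvt y_lt.
rewrite sin0 !subr0 in slope1; rewrite sin_pihalf in slope2.
have cos_c1 : cos c1 < 2 / pi.
  by rewrite -(ltr_pM2r y_gt0) -slope1 mulrAC.
have cos_c2 : 2 / pi < cos c2.
  have d_gt0 : 0 < pi / 2 - y by rewrite subr_gt0.
  rewrite -(ltr_pM2r d_gt0) -slope2.
  rewrite mulrBr [2 / pi * _]mulrC mulrA divfK ?pnatr_eq0 // divff ?gt_eqF //.
  by rewrite mulrAC ltrD2l ltrN2.
have : cos c2 < cos c1 by rewrite ltr_cos ?in_itv /=; lra.
lra.
Qed.

Lemma one_sub_cos_ge x : `|x| <= pi -> 2 * x ^+ 2 / pi ^+ 2 <= 1 - cos x.
Proof.
move=> x_le; have pi_pos : 0 < pi :> R := pi_gt0 R.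
set y := `|x| / 2.
have xE : `|x| = y *+ 2 by rewrite -mulr_natr divfK ?pnatr_eq0.
have y_itv : 0 <= y <= pi / 2.
  by apply/andP; split; rewrite ?divr_ge0 ?ler_pM2r ?invr_gt0.
have := sin_ge_jordan y_itv; rewrite mulr_natl -xE => jordan.
rewrite -real_normK ?num_real // -mulrA -expr_div_n -cos_norm [in cos _]xE.
rewrite cos_mulr2n cos2sin2.
have : 0 <= `|x| / pi by rewrite divr_ge0 // ltW.
nra.
Qed.

End Jordan.

Local Open Scope complex_scope.

Lemma sum_prim_root_exprM (F : idomainType) N (z : F) e : N.-primitive_root z ->
  \sum_(m < N) z ^+ (e * m) = if (N %| e)%N then N%:R else 0.
Proof.
move=> prim_z; under eq_bigr do rewrite exprM.
rewrite (prim_order_dvd prim_z); have [ze1 | ze_neq1] := eqVneq (z ^+ e) 1.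
  by rewrite ze1 (eq_bigr (fun _ => 1)) ?sumr_const ?card_ord // => m _; rewrite expr1n.
have := subrX1 (z ^+ e) N; rewrite -exprM mulnC exprM (prim_expr_order prim_z) expr1n subrr.
by move/esym/eqP; rewrite mulf_eq0 subr_eq0 (negbTE ze_neq1) => /eqP.
Qed.

Section ComplexExponential.
Context {R : realType}.
Implicit Types x y : R.

Lemma cexpi0 : cexpi (0 : R) = 1.
Proof. by rewrite /cexpi sin0 cos0. Qed.

Lemma cexpiD x y : cexpi (x + y) = cexpi x * cexpi y.
Proof. by rewrite /cexpi sinD cosD /=; congr (_ +i* _); ring. Qed.

Lemma cexpi_sum (I : Type) (r : seq I) (P : pred I) (F : I -> R) :
  cexpi (\sum_(i <- r | P i) F i) = \prod_(i <- r | P i) cexpi (F i).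
Proof. exact: (big_morph _ cexpiD cexpi0). Qed.

Lemma cexpiMn x k : cexpi (x *+ k) = cexpi x ^+ k.
Proof. by elim: k => [|k IHk]; rewrite ?cexpi0 // mulrS cexpiD IHk exprS. Qed.

Lemma norm_cexpi x : `|cexpi x| = 1.
Proof. by rewrite normc_def /= cos2Dsin2 sqrtr1. Qed.

Lemma cexpi_neq1 x : 0 < x < pi *+ 2 -> cexpi x != 1.
Proof.
move=> /andP[x_gt0 x_lt]; set y := x / 2.
have xE : x = y *+ 2 by rewrite -mulr_natr divfK ?pnatr_eq0.
have sin_y : 0 < sin y.
  by apply: sin_gt0_pi; rewrite divr_gt0 //= ltr_pdivrMr // mulr_natr.
apply/eqP => -[cos_x _]; move: cos_x; rewrite xE cos_mulr2n cos2sin2.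
nra.
Qed.

Lemma prim_root_cexpi N : (0 < N)%N -> N.-primitive_root (cexpi (pi *+ 2 / N%:R : R)).
Proof.
move=> N_gt0; have N_neq0 : N%:R != 0 :> R by rewrite pnatr_eq0 -lt0n.
have zN : cexpi (pi *+ 2 / N%:R : R) ^+ N = 1.
  by rewrite -cexpiMn -(mulr_natr (pi *+ 2 / _)) divfK // /cexpi cos2pi sin2pi.
have [m prim_m m_dvd] := prim_order_exists N_gt0 zN.
suff eq_mN : m = N by rewrite eq_mN in prim_m.
apply/eqP; rewrite eqn_leq dvdn_leq //= leqNgt; apply/negP => lt_mN.
have m_gt0 := prim_order_gt0 prim_m.
move/eqP: (prim_expr_order prim_m); apply/negP.
have two_pi_gt0 : 0 < pi *+ 2 :> R by rewrite mulrn_wgt0 ?pi_gt0.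
rewrite -cexpiMn -mulrnAr -(mulr_natl _ m); apply: cexpi_neq1.
rewrite pmulr_rgt0 // gtr_pMr // divr_gt0 ?ltr0n //=.
by rewrite ltr_pdivrMr ?ltr0n // mul1r ltr_nat.
Qed.

End ComplexExponential.

Section Expansion.
Context {R : realType}.

Lemma prod_bernoulli_expand n (p q z : R[i]) (d : 'I_n -> R) :
  \prod_(j < n) (q + p * cexpi (d j) * z) =
  \sum_(x : {ffun 'I_n -> bool})
     p ^+ weight x * q ^+ (n - weight x) * z ^+ weight x
       * cexpi (\sum_(j < n) d j * (x j)%:R).
Proof.
have factorE j : q + p * cexpi (d j) * z =
    \sum_(b : bool) (if b then p * cexpi (d j) * z else q).
  by rewrite big_bool /= addrC.
rewrite (eq_bigr _ (fun j _ => factorE j)) bigA_distr_bigA /=.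
apply: eq_bigr => x _.
have bitE j : (if x j then p * cexpi (d j) * z else q) =
    p ^+ x j * q ^+ (1 - x j) * z ^+ x j * cexpi (d j * (x j)%:R).
  by case: (x j); rewrite /= ?mulr1 ?mulr0 ?cexpi0; ring.
rewrite (eq_bigr _ (fun j _ => bitE j)) !big_split /= !prodrXr cexpi_sum.
by rewrite sum_subn_weight.
Qed.

(* The exponent [(n.+1 - s) * m] stands for [- s * m] modulo [n.+1]. *)
Lemma slice_sum_unity_root_filter n s (p q w : R[i]) (d : 'I_n -> R) :
  (s <= n)%N -> n.+1.-primitive_root w ->
  \sum_(m < n.+1) w ^+ ((n.+1 - s) * m) * \prod_(j < n) (q + p * cexpi (d j) * w ^+ m)
  = n.+1%:R * (p ^+ s * q ^+ (n - s))
      * \sum_(x in slice n s) cexpi (\sum_(j < n) d j * (x j)%:R).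
Proof.
move=> le_sn prim_w.
under eq_bigr => m _ do rewrite prod_bernoulli_expand mulr_sumr.
rewrite exchange_big /= mulr_sumr [RHS]big_mkcond /=; apply: eq_bigr => x _.
set c := p ^+ weight x * q ^+ (n - weight x); set G := cexpi _.
have termE (m : 'I_n.+1) : w ^+ ((n.+1 - s) * m) * (c * (w ^+ m) ^+ weight x * G)
    = c * G * w ^+ ((n.+1 - s + weight x) * m).
  by rewrite mulnDl exprD -exprM [(m * weight x)%N]mulnC; ring.
rewrite (eq_bigr _ (fun m _ => termE m)).
rewrite -mulr_sumr sum_prim_root_exprM // inE.
have -> : (n.+1 %| n.+1 - s + weight x)%N = (weight x == s).
  have le_wn := weight_le x.
  apply/idP/eqP => [/dvdnP[[|[|k]] eq_k] | ->]; [lia | lia | nia | ].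
  by rewrite subnK ?dvdnn // leqW.
by case: eqP => [wx | _]; rewrite ?mulr0 // /c wx; ring.
Qed.

End Expansion.

Section ProductBound.
Context {R : realType}.
Implicit Types p phi : R.

Lemma sqr_norm_bernoulli p phi :
  `|(1 - p)%:C + p%:C * cexpi phi| ^+ 2 = (1 - 2 * p * (1 - p) * (1 - cos phi))%:C.
Proof.
rewrite -add_Re2_Im2 /cexpi /=; congr (_%:C).
transitivity ((1 - p + p * cos phi) ^+ 2 + p ^+ 2 * sin phi ^+ 2); first ring.
by rewrite sin2cos2; ring.
Qed.

Lemma sqr_norm_bernoulli_bound p phi : 0 <= p <= 1 ->
  0 <= 1 - 2 * p * (1 - p) * (1 - cos phi) <= expR (- (2 * p * (1 - p) * (1 - cos phi))).
Proof.
move=> /andP[p_ge0 p_le1]; apply/andP; split; last exact: expR_ge1Dx.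
have := cos_geN1 phi; have := cos_le1 phi; have := sqr_ge0 (2 * p - 1).
nra.
Qed.

Lemma norm_prod_bernoulli_le n p (phi : 'I_n -> R) : 0 <= p <= 1 ->
  `|\prod_(j < n) ((1 - p)%:C + p%:C * cexpi (phi j))| <=
     (expR (- (p * (1 - p) * \sum_(j < n) (1 - cos (phi j)))))%:C.
Proof.
move=> p01; rewrite -(ler_pXn2r (_ : 0 < 2)%N) ?nnegrE ?normr_ge0 ?ler0c ?expR_ge0 //.
rewrite -normrX -prodrXl normr_prod.
under eq_bigr do rewrite normrX sqr_norm_bernoulli.
rewrite -rmorphXn -rmorph_prod lecR -expRM_natl mulrN mulrA mulr_sumr -sumrN expR_sum.
apply: ler_prod => j _; rewrite [2 * (p * _)]mulrA.
exact: sqr_norm_bernoulli_bound.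
Qed.

End ProductBound.

Lemma sum_sqr_diff (R : comPzRingType) n (f : 'I_n -> R) :
  \sum_(j < n) \sum_(k < n) (f j - f k) ^+ 2 =
  2 * n%:R * \sum_(j < n) f j ^+ 2 - 2 * (\sum_(j < n) f j) ^+ 2.
Proof.
have expand j k : (f j - f k) ^+ 2 = f j ^+ 2 + f k ^+ 2 - 2 * (f j * f k) by ring.
under eq_bigr => j _ do under eq_bigr => k _ do rewrite expand.
under eq_bigr => j _ do rewrite sumrB big_split /= sumr_const card_ord -!mulr_sumr.
rewrite sumrB big_split /= sumr_const card_ord -mulr_sumr -mulr_suml.
by rewrite sumrMnl; ring.
Qed.

Section CosineSums.
Context {R : realType}.

Lemma sum_sqr_diff_varJ n (a : 'I_n -> R) :
  \sum_(j < n) \sum_(k < n) (a j - a k) ^+ 2 = 2 * n%:R ^+ 2 * varJ a.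
Proof.
case: n a => [a | n a]; first by rewrite !big_ord0 expr0n mulr0 mul0r.
pose b j := a j - meanJ a.
have sum_b : \sum_(j < n.+1) b j = 0.
  by rewrite sumrB sumr_const card_ord /meanJ; field; rewrite nat1r pnatr_eq0.
have -> : \sum_(j < n.+1) \sum_(k < n.+1) (a j - a k) ^+ 2 =
    \sum_(j < n.+1) \sum_(k < n.+1) (b j - b k) ^+ 2.
  by apply: eq_bigr => j _; apply: eq_bigr => k _; rewrite /b opprB addrA subrK.
rewrite sum_sqr_diff sum_b /varJ -/b.
by field; rewrite nat1r pnatr_eq0.
Qed.

Lemma sum_cos_pairs_le n (x : 'I_n -> R) th :
  \sum_(j < n) \sum_(k < n) (1 - cos (x j - x k)) <=
    2 * n%:R * \sum_(j < n) (1 - cos (x j + th)).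
Proof.
set C := \sum_(j < n) cos (x j); set S := \sum_(j < n) sin (x j).
have pairsE : \sum_(j < n) \sum_(k < n) cos (x j - x k) = C ^+ 2 + S ^+ 2.
  under eq_bigr do under eq_bigr do rewrite cosB.
  under eq_bigr do rewrite big_split /= -!mulr_sumr.
  by rewrite big_split /= -!mulr_suml !expr2.
have shiftE : \sum_(j < n) cos (x j + th) = cos th * C - sin th * S.
  under eq_bigr do rewrite cosD.
  by rewrite sumrB -!mulr_suml -/C -/S; ring.
(* rotating by [th] does not increase the length of the vector (C, S) *)
have shift_le : (cos th * C - sin th * S) ^+ 2 <= C ^+ 2 + S ^+ 2.
  have := sqr_ge0 (sin th * C + cos th * S); have := cos2Dsin2 th; nra.
set X := cos th * C - sin th * S in shiftE shift_le.
under eq_bigr do rewrite sumrB sumr_const card_ord.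
rewrite sumrB sumr_const card_ord pairsE sumrB sumr_const card_ord shiftE.
(* n^2 - X^2 <= 2 n (n - X), the difference being (n - X)^2 *)
have := sqr_ge0 (n%:R - X).
nra.
Qed.

Lemma sum_one_sub_cos_ge n (a : 'I_n -> R) (t th : R) :
  (forall j k, `|(a j - a k) * t| <= pi) ->
  2 * t ^+ 2 * varJ a * n%:R / pi ^+ 2 <= \sum_(j < n) (1 - cos (t * a j + th)).
Proof.
move=> ht; case: n a ht => [a _ | n a ht]; first by rewrite big_ord0 mulr0 mul0r.
have n2_gt0 : 0 < 2 * n.+1%:R :> R by rewrite mulr_gt0 ?ltr0n.
rewrite -(ler_pM2l n2_gt0); apply: le_trans (sum_cos_pairs_le (fun j => t * a j) th).
have -> : 2 * n.+1%:R * (2 * t ^+ 2 * varJ a * n.+1%:R / pi ^+ 2) =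
    \sum_(j < n.+1) \sum_(k < n.+1) 2 * ((a j - a k) * t) ^+ 2 / pi ^+ 2.
  transitivity (2 * t ^+ 2 / pi ^+ 2 * \sum_(j < n.+1) \sum_(k < n.+1) (a j - a k) ^+ 2).
    by rewrite sum_sqr_diff_varJ; ring.
  rewrite mulr_sumr; apply: eq_bigr => j _; rewrite mulr_sumr; apply: eq_bigr => k _; ring.
apply: ler_sum => j _; apply: ler_sum => k _.
by rewrite -mulrBr [t * _]mulrC; apply: one_sub_cos_ge.
Qed.

End CosineSums.

Section SliceCharfun.
Context {R : realType}.

Lemma norm_prod_bernoulli_varJ_le n (a : 'I_n -> R) (t p th : R) : 0 <= p <= 1 ->
  (forall j k, `|(a j - a k) * t| <= pi) ->
  `|\prod_(j < n) ((1 - p)%:C + p%:C * cexpi (t * a j + th))| <=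
    (expR (- (2 * p * (1 - p) * t ^+ 2 * varJ a * n%:R / pi ^+ 2)))%:C.
Proof.
move=> p01 ht; apply: le_trans (norm_prod_bernoulli_le _ p01) _.
rewrite lecR ler_expR lerN2.
have -> : 2 * p * (1 - p) * t ^+ 2 * varJ a * n%:R / pi ^+ 2 =
    p * (1 - p) * (2 * t ^+ 2 * varJ a * n%:R / pi ^+ 2) by ring.
have pq_ge0 : 0 <= p * (1 - p) by case/andP: p01 => p_ge0 p_le1; rewrite mulr_ge0 ?subr_ge0.
by rewrite ler_wpM2l // sum_one_sub_cos_ge.
Qed.

Lemma norm_slice_charfun_le n s (a : 'I_n -> R) (t p : R) :
  (s <= n)%N -> 0 <= p <= 1 -> (forall j k, `|(a j - a k) * t| <= pi) ->
  ('C(n, s)%:R * (p ^+ s * (1 - p) ^+ (n - s)))%:C * `|slice_charfun s a t| <=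
    (expR (- (2 * p * (1 - p) * t ^+ 2 * varJ a * n%:R / pi ^+ 2)))%:C.
Proof.
move=> le_sn p01 ht; set B := expR _.
have sumE : \sum_(x in slice n s) cexpi (\sum_(j < n) t * a j * (x j)%:R) =
    'C(n, s)%:R * slice_charfun s a t.
  rewrite /slice_charfun card_slice mulVKf ?pnatr_eq0 -?lt0n ?bin_gt0 //.
  apply: eq_bigr => x _; rewrite mulr_sumr; congr cexpi.
  by apply: eq_bigr => j _; rewrite mulrA.
have := slice_sum_unity_root_filter p%:C (1 - p)%:C (fun j => t * a j) le_sn (prim_root_cexpi (ltn0Sn n)).
rewrite sumE -!rmorphXn -rmorphM /= => filterE.
set phi := slice_charfun s a t in filterE *; set r := p ^+ s * (1 - p) ^+ (n - s) in filterE *.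
have r_ge0 : 0 <= r.
  by case/andP: p01 => p_ge0 p_le1; rewrite mulr_ge0 ?exprn_ge0 ?subr_ge0.
clearbody phi r.
have : `|n.+1%:R * r%:C * ('C(n, s)%:R * phi)| <= n.+1%:R * B%:C.
  rewrite -filterE (_ : n.+1%:R * B%:C = \sum_(m < n.+1) B%:C); last first.
    by rewrite sumr_const card_ord mulr_natl.
  apply: le_trans (ler_norm_sum _ _ _) _; apply: ler_sum => m _.
  rewrite normrM normrX norm_cexpi expr1n mul1r.
  under eq_bigr do rewrite -mulrA -cexpiMn -cexpiD.
  exact: norm_prod_bernoulli_varJ_le.
rewrite -mulrA normrM normr_nat ler_pM2l ?ltr0n // normrM ger0_norm ?ler0c //.
move=> bound; apply: le_trans bound; rewrite normrM normr_nat (rmorphM _ 'C(n, s)%:R r).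
by rewrite rmorph_nat mulrA [r%:C * _]mulrC.
Qed.

End SliceCharfun.

Theorem lemma2p8 (R : realType) (n s : nat) (hs : (s <= n)%N)
  (a : 'I_n -> R) (t : R)
  (ht : forall j k : 'I_n, `|(a j - a k) * t| <= pi) :
  let p : R := s%:R / n%:R in
  `|slice_charfun s a t| <=
    ((n.+1)%:R * expR (- (2 * p * (1 - p) * t ^+ 2 * varJ a * n%:R / pi ^+ 2)))%:C.
Proof.
rewrite /=; set p : R := s%:R / n%:R.
have pn : p * n%:R = s%:R.
  have [n0 | n_gt0] := posnP n; last by rewrite /p divfK // pnatr_eq0 -lt0n.
  by move: hs; rewrite n0 leqn0 => /eqP ->; rewrite mulr0.
have p01 : 0 <= p <= 1.
  rewrite /p divr_ge0 ?ler0n //=; have [-> | n_gt0] := posnP n; first by rewrite invr0 mulr0.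
  by rewrite ler_pdivrMr ?ltr0n // mul1r ler_nat.
have mode : 1 <= (n.+1%:R * ('C(n, s)%:R * (p ^+ s * (1 - p) ^+ (n - s))))%:C.
  by rewrite -(rmorph1 (real_complex R)) lecR mulrA binomial_mode_ge.
apply: le_trans (ler_peMl (normr_ge0 _) mode) _.
rewrite !(rmorphM _ n.+1%:R) rmorph_nat -(mulrA n.+1%:R) ler_wpM2l ?ler0n //.
exact: norm_slice_charfun_le.
Qed.
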